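(* Let $K$ be a set of $m$ knapsacks with capacities $S_i$, $i\in K$, and let $J_S'$ be a set of items each of which is small with respect to every knapsack of $K$, i.e., $s_j<\varepsilon S_i$ for all $j\in J_S'$ and $i\in K$. Let $J_B'$ be a set of items together with a feasible integral packing of $J_B'$ into the knapsacks of $K$ such that the total remaining free capacity in these $m$ knapsacks is at least $s(J_S')=\sum_{j\in J_S'}s_j$. Then the following procedure feasibly packs all items of $J_B'\cup J_S'$ into the $m$ knapsacks of $K$ plus $\varepsilon m$ additional knapsacks, each of which has capacity $\min_{i\in K}S_i$: keep the packing of $J_B'$; consider the items of $J_S'$ in an arbitrary order and the knapsacks of $K$ in an arbitrary order, with the first knapsack opened; if the current small item fits into the remaining capacity of the currently open knapsack, place it there; otherwise place it into the next free slot of the additional knapsacks, close the current knapsack and open the next one.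
   Context: Throughout, $\varepsilon>0$ with $\frac1\varepsilon\in\mathbb{N}$ and $\varepsilon m\in\mathbb{N}$. A packing is feasible if every item is placed in at most one knapsack and the total size of items in each knapsack does not exceed its capacity. *)

From HB Require Import structures.
From mathcomp Require Import all_boot all_order all_algebra.
Set Implicit Arguments. Unset Strict Implicit. Unset Printing Implicit Defensive.
Import Order.TTheory GRing.Theory Num.Theory.
Local Open Scope ring_scope.

(* Destinations of an item: inl i = knapsack i of K (i : 'I_m);
   inr t = the t-th additional knapsack (0-based). *)
Definition dest (m : nat) := ('I_m + nat)%type.

Section Knapsack.
Variables (R : realFieldType) (I : finType) (m : nat).

Definition bload (JB : {set I}) (s : I -> R) (pB : I -> option 'I_m) (i : 'I_m) : R :=
  \sum_(j in JB | pB j == Some i) s j.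

(* The greedy procedure.
   free i : remaining capacity of knapsack i after packing the big items;
   k      : number of slots per additional knapsack (k = 1/eps); the c-th
            (0-based) overflowing item goes to the next free slot, i.e. to
            additional knapsack c %/ k;
   ks     : remaining knapsacks of K in the chosen order, the head being the
            currently open one;
   r      : remaining capacity of the currently open knapsack;
   c      : number of slots of the additional knapsacks already used;
   js     : remaining small items, in the chosen order.
   The output lists the destination of each item of js, in order.
   (The branch ks = [::], where no knapsack of K is open anymore, is an
   arbitrary completion: items are put in further slots.) *)
Fixpoint greedy (free : 'I_m -> R) (k : nat) (s : I -> R)
    (ks : seq 'I_m) (r : R) (c : nat) (js : seq I) : seq (dest m) :=
  match js with
  | [::] => [::]
  | j :: js' =>
    match ks with
    | [::] => inr (c %/ k)%N :: greedy free k s ks r c.+1 js'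
    | i :: ks' =>
      if s j <= r then inl i :: greedy free k s ks (r - s j) c js'
      else
        let r' := match ks' with i' :: _ => free i' | [::] => 0 end in
        inr (c %/ k)%N :: greedy free k s ks' r' c.+1 js'
    end
  end.

Definition greedy_run (free : 'I_m -> R) (k : nat) (s : I -> R)
    (ks : seq 'I_m) (js : seq I) : seq (dest m) :=
  greedy free k s ks (match ks with i :: _ => free i | [::] => 0 end) 0 js.

Definition final_packing (S : 'I_m -> R) (s : I -> R) (JB JS : {set I})
    (pB : I -> option 'I_m) (k : nat) (ks : seq 'I_m) (js : seq I)
    (j : I) : option (dest m) :=
  if j \in JB then omap inl (pB j)
  else if j \in JS then
    Some (nth (inr 0%N) (greedy_run (fun i => S i - bload JB s pB i) k s ks js)
              (index j js))
  else None.

(* Feasible packing of the items of A into the m knapsacks of K (capacities S)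
   plus e additional knapsacks of capacity min_i S i (i.e. <= S i for all i):
   every item of A is placed (in exactly one knapsack, as f is a function),
   only items of A are placed, and no capacity is exceeded. *)
Definition feasible_ext (S : 'I_m -> R) (s : I -> R) (e : nat) (A : {set I})
    (f : I -> option (dest m)) : Prop :=
  [/\ forall j, j \in A -> f j != None,
      forall j, j \notin A -> f j = None,
      forall i : 'I_m, \sum_(j | f j == Some (inl i)) s j <= S i,
      forall t : nat, (exists j, f j = Some (inr t)) -> (t < e)%N
    & forall (t : nat) (i : 'I_m), \sum_(j | f j == Some (inr t)) s j <= S i].

End Knapsack.

(* The big items keep their places, and the greedy procedure puts a small item
   into the open knapsack of K only when it fits into what is left of the free
   capacity S_i - load_i; so the knapsacks of K stay feasible.  Each overflow
   closes the open knapsack, and the last knapsack of K can never overflow,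
   since the small items would then exceed the total free capacity: at most
   m - 1 items overflow.  The c-th of them goes to additional knapsack c / k
   with k = 1/eps, so only additional knapsacks of index below m / k = eps m
   are used, and each receives at most k items of size < eps S_i, that is,
   less than S_i in total. *)

From mathcomp Require Import all_boot all_order all_algebra.
From mathcomp Require Import lra.
Import Order.TTheory GRing.Theory Num.Theory.
Local Open Scope ring_scope.
Set Implicit Arguments. Unset Strict Implicit.

Lemma ler_sum_count (R : numDomainType) (T : eqType) (l : seq T) (P : pred T)
    (F : T -> R) (a : R) :
  (forall x, x \in l -> F x <= a) -> \sum_(x <- l | P x) F x <= a *+ count P l.
Proof.
move=> le_Fa; rewrite -iter_addr_0 -big_const_seq big_seq_cond [leLHS]big_seq_cond.
by apply: ler_sum => x /andP[/le_Fa].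
Qed.

Lemma count_divn_iota (k c n t : nat) :
  (0 < k)%N -> (count (fun x => x %/ k == t) (iota c n) <= k)%N.
Proof.
move=> k_gt0; rewrite -size_filter -[X in (_ <= X)%N](size_iota (t * k) k).
apply: uniq_leq_size; first exact/filter_uniq/iota_uniq.
move=> x; rewrite mem_filter => /andP[/eqP <- _].
by rewrite mem_iota leq_divM /= {1}(divn_eq x k) ltn_add2l ltn_pmod.
Qed.

Lemma zip_nth_index (T : eqType) (U : Type) (x0 : U) (js : seq T) (o : seq U) :
  uniq js -> size o = size js ->
  zip js o = [seq (j, nth x0 o (index j js)) | j <- js].
Proof.
elim: js o => [|j js IH] [|x o] //= /andP[j_notin uniq_js] [size_o].
rewrite eqxx (IH o uniq_js size_o); congr cons; apply/eq_in_map => j' j'_in /=.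
by case: eqP j_notin => // ->; rewrite j'_in.
Qed.

Section Greedy.
Variables (R : realFieldType) (I : finType) (m : nat).
Variables (free : 'I_m -> R) (k : nat) (s : I -> R).

Definition slot_of (d : dest m) : option nat := if d is inr t then Some t else None.

Definition head_free (ks : seq 'I_m) : R := if ks is i :: _ then free i else 0.

Definition open_capacity (ks : seq 'I_m) (r : R) : R :=
  if ks is _ :: ks' then r + \sum_(i <- ks') free i else 0.

Definition remaining_capacity (ks : seq 'I_m) (r : R) (i : 'I_m) : R :=
  if ks is i0 :: ks' then (if i == i0 then r else if i \in ks' then free i else 0)
  else 0.

Lemma size_greedy ks r c js : size (greedy free k s ks r c js) = size js.
Proof.
elim: js ks r c => [|j js IH] [|i ks] r c //=; first by rewrite IH.
by case: ifP => _ /=; rewrite IH.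
Qed.

Lemma greedy_slots ks r c js :
  exists n, pmap slot_of (greedy free k s ks r c js) = [seq x %/ k | x <- iota c n]%N.
Proof.
elim: js ks r c => [|j js IH] [|i ks] r c /=; try by exists 0%N.
  by have [n ->] := IH [::] r c.+1; exists n.+1.
case: ifP => _ /=; first exact: IH.
by have [n ->] := IH ks (head_free ks) c.+1; exists n.+1.
Qed.

Lemma count_greedy_slot ks r c js t : (0 < k)%N ->
  (count (fun p => p.2 == inr t) (zip js (greedy free k s ks r c js)) <= k)%N.
Proof.
move=> k_gt0; rewrite -(count_map snd (pred1 (inr t))) -/(unzip2 _).
rewrite unzip2_zip ?size_greedy //.
have -> : forall o, count_mem (inr t) o = count_mem t (pmap slot_of o).
  by elim=> [|[i|t'] o IH] //=; rewrite IH.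
by have [n ->] := greedy_slots ks r c js; rewrite count_map; exact: count_divn_iota.
Qed.

Lemma greedy_run_slot_load ks js t (a : R) : (0 < k)%N -> 0 <= a ->
  (forall j, j \in js -> s j <= a) ->
  \sum_(p <- zip js (greedy_run free k s ks js) | p.2 == inr t) s p.1 <= a *+ k.
Proof.
move=> k_gt0 a_ge0 small_js.
have small_zip p : p \in zip js (greedy_run free k s ks js) -> s p.1 <= a.
  move=> /(map_f fst); rewrite -/(unzip1 _) unzip1_zip ?size_greedy //.
  exact: small_js.
apply: le_trans (ler_sum_count _ small_zip) (ler_wpMn2l a_ge0 _).
exact: count_greedy_slot.
Qed.

Hypothesis s_gt0 : forall j, 0 < s j.

Let sum_s_ge0 (js : seq I) : 0 <= \sum_(j <- js) s j.
Proof. by apply: sumr_ge0 => j _; exact: ltW. Qed.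

Lemma size_greedy_slots ks r c js :
  \sum_(j <- js) s j <= open_capacity ks r ->
  (size (pmap slot_of (greedy free k s ks r c js)) <= (size ks).-1)%N.
Proof.
elim: js ks r c => [|j js IH] [|i ks] r c //=; rewrite big_cons.
  by have := s_gt0 j; have := sum_s_ge0 js; lra.
case: ifP => [fits|/negbT]; first by move=> le_js; apply: IH => /=; lra.
rewrite -ltNge => r_lt.
case: ks IH => [|i' ks] IH /=; rewrite ?big_nil ?big_cons.
  by have := sum_s_ge0 js; lra.
by move=> le_js; rewrite ltnS; apply: IH => /=; lra.
Qed.

Lemma greedy_run_slot_lt ks js t :
  \sum_(j <- js) s j <= \sum_(i <- ks) free i ->
  inr t \in greedy_run free k s ks js -> (t * k < size ks)%N.
Proof.
move=> le_js t_in.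
have [n slotsE] := greedy_slots ks (head_free ks) 0 js.
have t_slot : t \in [seq x %/ k | x <- iota 0 n]%N.
  by rewrite -slotsE mem_pmap; exact: (map_f slot_of t_in).
have n_le : (n <= (size ks).-1)%N.
  rewrite -(size_iota 0 n) -(size_map (divn^~ k)) -slotsE; apply: size_greedy_slots.
  by case: (ks) le_js => [|i ks'] /=; rewrite ?big_nil ?big_cons.
case/mapP: t_slot => x; rewrite mem_iota add0n => x_lt ->.
by rewrite (leq_ltn_trans (leq_divM x k)) // (leq_trans x_lt) // (leq_trans n_le) ?leq_pred.
Qed.

Hypothesis free_ge0 : forall i, 0 <= free i.

Lemma head_free_ge0 ks : 0 <= head_free ks.
Proof. by case: ks => //= i _. Qed.

Lemma remaining_capacity_head ks i :
  remaining_capacity ks (head_free ks) i = if i \in ks then free i else 0.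
Proof. by case: ks => //= i0 ks; rewrite in_cons; case: eqP => [->|]. Qed.

Lemma greedy_load ks r c js i : uniq ks -> 0 <= r ->
  \sum_(p <- zip js (greedy free k s ks r c js) | p.2 == inl i) s p.1
    <= remaining_capacity ks r i.
Proof.
elim: js ks r c => [|j js IH] [|i0 ks] r c uniq_ks r_ge0.
- by rewrite big_nil.
- by rewrite big_nil /=; case: eqP => // _; case: ifP.
- by rewrite big_cons; exact: IH.
rewrite [greedy _ _ _ _ _ _ _]/=; case: ifP => [fits|_]; rewrite [zip _ _]/= big_cons /=.
  have := IH (i0 :: ks) (r - s j) c uniq_ks; rewrite subr_ge0 => /(_ fits) /=.
  have -> : (inl i0 == inl i :> dest m) = (i == i0) by rewrite eq_sym.
  by case: eqP => // _; lra.
case/andP: uniq_ks => i0_notin uniq_ks.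
apply: le_trans (IH ks (head_free ks) c.+1 uniq_ks (head_free_ge0 ks)) _.
by rewrite remaining_capacity_head; case: eqP => [->|_]; rewrite ?(negbTE i0_notin).
Qed.

Lemma greedy_run_load ks js i : uniq ks ->
  \sum_(p <- zip js (greedy_run free k s ks js) | p.2 == inl i) s p.1 <= free i.
Proof.
move=> uniq_ks.
apply: le_trans (greedy_load 0 js i uniq_ks (head_free_ge0 ks)) _.
by rewrite remaining_capacity_head; case: ifP.
Qed.

End Greedy.

Section FinalPacking.
Variables (R : realFieldType) (I : finType) (m : nat).
Variables (S : 'I_m -> R) (s : I -> R) (JB JS : {set I}) (pB : I -> option 'I_m).
Variables (k : nat) (ks : seq 'I_m) (js : seq I).
Hypotheses (JB_JS : [disjoint JB & JS]) (js_perm : perm_eq js (enum JS)).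

Local Notation packing := (final_packing S s JB JS pB k ks js).
Local Notation out := (greedy_run (fun i => S i - bload JB s pB i) k s ks js).

Lemma final_packing_eq_None j : (forall j, j \in JB -> pB j != None) ->
  (packing j == None) = (j \notin JB :|: JS).
Proof.
move=> pB_JB; rewrite /final_packing in_setU; case: ifP => [/pB_JB|_ /=].
  by case: (pB j).
by case: ifP.
Qed.

Lemma final_packing_load d :
  \sum_(j | packing j == Some d) s j
    = (if d is inl i then bload JB s pB i else 0)
      + \sum_(p <- zip js out | p.2 == d) s p.1.
Proof.
have uniq_js : uniq js by rewrite (perm_uniq js_perm) enum_uniq.
rewrite (zip_nth_index (inr 0%N) uniq_js (size_greedy _ _ _ _ _ _ _)) big_map.
rewrite (perm_big _ js_perm) big_enum_cond /=.
case: d => [i|t]; last first.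
  rewrite add0r big_mkcond [RHS]big_mkcond; apply: eq_bigr => j _ /=.
  rewrite /final_packing; case JBj: (j \in JB).
    by rewrite (disjointFr JB_JS JBj); case: (pB j).
  by case: (j \in JS).
rewrite /bload big_mkcond [X in _ = X + _]big_mkcond [X in _ = _ + X]big_mkcond.
rewrite -big_split; apply: eq_bigr => j _ /=.
rewrite /final_packing; case JBj: (j \in JB).
  by rewrite (disjointFr JB_JS JBj) addr0; case: (pB j).
by rewrite add0r; case: (j \in JS).
Qed.

Lemma final_packing_slot j t : packing j = Some (inr t) -> inr t \in out.
Proof.
rewrite /final_packing; case: ifP => _; first by case: (pB j).
case: ifP => // JSj [<-]; apply: mem_nth.
by rewrite size_greedy index_mem (perm_mem js_perm) mem_enum.
Qed.

End FinalPacking.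

Theorem lemmaC5 (R : realFieldType) (I : finType) (m k e : nat) (eps : R)
    (S : 'I_m -> R) (s : I -> R) (JB JS : {set I}) (pB : I -> option 'I_m)
    (ks : seq 'I_m) (js : seq I) :
  (0 < m)%N ->
  0 < eps -> eps^-1 = k%:R -> eps * m%:R = e%:R ->
  (forall j, 0 < s j) ->
  [disjoint JB & JS] ->
  (forall j (i : 'I_m), j \in JS -> s j < eps * S i) ->
  (forall j, j \in JB -> pB j != None) ->
  (forall i, bload JB s pB i <= S i) ->
  \sum_(j in JS) s j <= \sum_(i < m) (S i - bload JB s pB i) ->
  perm_eq ks (enum 'I_m) ->
  perm_eq js (enum JS) ->
  feasible_ext S s e (JB :|: JS) (final_packing S s JB JS pB k ks js).
Proof.
move=> _ eps_gt0 epsV epsm s_gt0 JB_JS small_JS pB_JB bload_le sum_JS ks_perm js_perm.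
set free := fun i => S i - bload JB s pB i.
have free_ge0 i : 0 <= free i by rewrite subr_ge0.
have k_gt0 : (0 < k)%N by rewrite -(ltr0n R) -epsV invr_gt0.
have eps_k : eps * k%:R = 1 by rewrite -epsV mulfV ?gt_eqF.
have e_k : (e * k)%N = m by apply/eqP; rewrite -(eqr_nat R) natrM -epsm mulrAC eps_k mul1r.
have uniq_ks : uniq ks by rewrite (perm_uniq ks_perm) enum_uniq.
have sum_js : \sum_(j <- js) s j <= \sum_(i <- ks) free i.
  by rewrite (perm_big _ js_perm) (perm_big _ ks_perm) !big_enum.
split.
- by move=> j; rewrite final_packing_eq_None // negbK.
- by move=> j j_notin; apply/eqP; rewrite final_packing_eq_None.
- by move=> i; rewrite final_packing_load // -lerBrDl; apply: greedy_run_load.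
- move=> t [j /(final_packing_slot js_perm) /(greedy_run_slot_lt s_gt0 sum_js)].
  by rewrite (perm_size ks_perm) size_enum_ord -e_k ltn_pmul2r.
move=> t i; rewrite final_packing_load // add0r -[leRHS]mul1r -eps_k mulrAC mulr_natr.
apply: greedy_run_slot_load => // [|j].
  apply: mulr_ge0 (ltW eps_gt0) (le_trans _ (bload_le i)).
  by apply: sumr_ge0 => j _; exact: ltW.
by rewrite (perm_mem js_perm) mem_enum => /(small_JS _ i)/ltW.
Qed.
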